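(* Let $K$ be a planar convex body and let $(t_1,t_2)$ be an open interval of $S^1$ of length less than $\pi$ (with $t_1<t_2$). The following are equivalent: (1) $(t_1,t_2)$ is disjoint from $\mathbf{n}(K)$; (2) there is a single point $p$ with $v_K^+(t)=v_K^-(t)=p$ for all $t\in(t_1,t_2)$; (3) all tangent lines $l_K(t)$, $t\in[t_1,t_2]$, pass through a common point; (4) the point $l_K(t_1)\cap l_K(t_2)$ belongs to $K$.
   Context: A planar convex body is a nonempty compact convex subset of $\mathbb{R}^2$ (possibly with empty interior). For $t\in\mathbb{R}$ let $u_t=(\cos t,\sin t)$, $v_t=(-\sin t,\cos t)$; $p_K(t)=\max_{p\in K}p\cdot u_t$; the tangent line is $l_K(t)=\{p:p\cdot u_t=p_K(t)\}$ and the edge $e_K(t)=K\cap l_K(t)$; $v_K^+(t)$ (resp. $v_K^-(t)$) is the endpoint of $e_K(t)$ farthest in direction $v_t$ (resp. $-v_t$). $\sigma_K$ is the surface area measure of $K$ on $S^1$ (Schneider's $S_1(K,\cdot)$), and $\mathbf{n}(K)$, the set of normal angles of $K$, is the support of $\sigma_K$. *)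

From HB Require Import structures.
From mathcomp Require Import all_boot all_order all_algebra.
From mathcomp Require Import all_classical all_reals all_analysis.
Import numFieldNormedType.Exports.
Set Implicit Arguments. Unset Strict Implicit. Unset Printing Implicit Defensive.
Import Order.TTheory GRing.Theory Num.Theory.
Local Open Scope classical_set_scope.
Local Open Scope ring_scope.

Section Planar.
Variable R : realType.
Local Notation pt := (R * R)%type.

Definition dot (p q : pt) : R := p.1 * q.1 + p.2 * q.2.
Definition u_ (t : R) : pt := (cos t, sin t).
Definition v_ (t : R) : pt := (- sin t, cos t).

Definition convex_set2 (K : set pt) : Prop :=
  forall x y, K x -> K y -> forall l : R, 0 <= l <= 1 ->
    K (l * x.1 + (1 - l) * y.1, l * x.2 + (1 - l) * y.2).
Definition convex_body (K : set pt) : Prop :=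
  K !=set0 /\ compact K /\ convex_set2 K.

Definition pK (K : set pt) (t : R) : R := sup [set dot p (u_ t) | p in K].
Definition lK (K : set pt) (t : R) : set pt := [set p | dot p (u_ t) = pK K t].
Definition eK (K : set pt) (t : R) : set pt := K `&` lK K t.

Definition vplus (K : set pt) (t : R) : pt :=
  xget (0, 0) [set p | eK K t p /\ forall q, eK K t q -> dot q (v_ t) <= dot p (v_ t)].
Definition vminus (K : set pt) (t : R) : pt :=
  xget (0, 0) [set p | eK K t p /\ forall q, eK K t q -> dot p (v_ t) <= dot q (v_ t)].

(* Euclidean distance, diameter (diam of the empty set is 0) *)
Definition edist (x y : pt) : R := Num.sqrt ((x.1 - y.1) ^+ 2 + (x.2 - y.2) ^+ 2).
Definition diam (A : set pt) : \bar R :=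
  ereal_sup ([set z | exists x y, A x /\ A y /\ z = (edist x y)%:E] `|` [set 0%E]).

Definition H1_delta (d : R) (A : set pt) : \bar R :=
  ereal_inf [set s | exists C : nat -> set pt,
     A `<=` \bigcup_i C i /\ (forall i, (diam (C i) <= d%:E)%E) /\
     s = (\sum_(0 <= i <oo) diam (C i))%E].
Definition H1 (A : set pt) : \bar R :=
  ereal_sup [set H1_delta d A | d in [set d : R | 0 < d]].

(* surface area measure S_1(K, .) : length of the reverse spherical image;
   a set w of angles (reals, read mod 2pi) represents a subset of S^1 *)
Definition sigmaK (K : set pt) (w : set R) : \bar R :=
  H1 (\bigcup_(t in w) eK K t).

(* n(K) = support of sigma_K: angles all of whose neighbourhoods have positive measure *)
Definition normal_angle (K : set pt) (t : R) : Prop :=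
  forall e : R, 0 < e -> (0 < sigmaK K [set s : R | (t - e < s < t + e)%R])%E.

End Planar.

(* Since 0 < t2 - t1 < pi, the normals u_t1 and u_t2 are independent and u_t is a positive
   combination of them for t1 < t < t2.  Hence a point of K on l_K(t1) and l_K(t2) is the only
   point of every edge e_K(t) in between, so the reverse spherical image of the arc is a point and
   sigma_K vanishes there; the same computation puts a common point of the tangent lines into K.
   Conversely, if sigma_K vanishes near t, two nearby edges cannot differ: the edge map has closed
   graph and convex values, so the edges in between project onto a whole interval of a direction
   separating them, which forces positive length.  Edges are thus locally, hence globally, one
   point p on the arc, and by continuity p also lies on the tangent lines at the endpoints. *)

From Pilot Require Import Defs.
From HB Require Import structures.
From mathcomp Require Import all_boot all_order all_algebra.
From mathcomp Require Import all_classical all_reals all_analysis.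
From mathcomp Require Import ring lra.
Import numFieldNormedType.Exports.
Set Implicit Arguments. Unset Printing Implicit Defensive.
Import Order.TTheory GRing.Theory Num.Theory.
Local Open Scope classical_set_scope.
Local Open Scope ring_scope.

Section Plane.
Variable R : realType.
Local Notation pt := (R * R)%type.
Implicit Types (a b s t r : R) (c p q w x y z : pt).

Lemma dotBl x y c : dot (x - y) c = dot x c - dot y c.
Proof. by rewrite /dot /=; ring. Qed.

Lemma dot_conv l x y c :
  dot (l * x.1 + (1 - l) * y.1, l * x.2 + (1 - l) * y.2) c = l * dot x c + (1 - l) * dot y c.
Proof. by rewrite /dot /=; ring. Qed.

Lemma sinB_dot_u a b t w :
  sin (b - a) * dot w (u_ t) = sin (b - t) * dot w (u_ a) + sin (t - a) * dot w (u_ b).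
Proof. by rewrite /dot /u_ /= !sinB; ring. Qed.

Lemma arc_sin_gt0 {a t b : R} : a < t < b -> b - a < pi ->
  [/\ 0 < sin (b - a), 0 < sin (b - t) & 0 < sin (t - a)].
Proof.
by move=> /andP[ta tb] ba; split; apply: sin_gt0_pi; apply/andP; split; lra.
Qed.

Lemma dot_u_arc_le0 {a t b : R} {w : pt} : a < t < b -> b - a < pi ->
  dot w (u_ a) <= 0 -> dot w (u_ b) <= 0 -> dot w (u_ t) <= 0.
Proof.
move=> tab ba wa wb; have [sba sbt sta] := arc_sin_gt0 tab ba.
by have := sinB_dot_u a b t w; nra.
Qed.

Lemma dot_u_arc_eq0 {a t b : R} {w : pt} : a < t < b -> b - a < pi ->
  dot w (u_ a) <= 0 -> dot w (u_ b) <= 0 -> 0 <= dot w (u_ t) -> w = 0.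
Proof.
move=> tab ba wa wb wt; have [sba sbt sta] := arc_sin_gt0 tab ba.
have decomp := sinB_dot_u a b t w.
have wa0 : dot w (u_ a) = 0 by nra.
have wb0 : dot w (u_ b) = 0 by nra.
(* Cramer's rule for the basis [u_ a], [u_ b], whose determinant is [sin (b - a)]. *)
have w1 : w.1 * sin (b - a) = sin b * dot w (u_ a) - sin a * dot w (u_ b).
  by rewrite /dot /u_ /= sinB; ring.
have w2 : w.2 * sin (b - a) = cos a * dot w (u_ b) - cos b * dot w (u_ a).
  by rewrite /dot /u_ /= sinB; ring.
rewrite wa0 wb0 in w1 w2.
by case: w w1 w2 {decomp wa wb wt wa0 wb0} => x y /= w1 w2; congr (_, _); nra.
Qed.

Lemma continuous_dot c : continuous (fun x : pt => dot x c).
Proof.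
move=> x; apply: cvgD; apply: cvgMr_tmp.
  exact: (@cvg_fst _ _ (nbhs x.1) (nbhs x.2)).
exact: (@cvg_snd _ _ (nbhs x.1) (nbhs x.2)).
Qed.

Lemma continuous_dot_u w : continuous (fun t => dot w (u_ t)).
Proof.
by move=> t; apply: cvgD; apply: cvgMl_tmp; [exact: continuous_cos | exact: continuous_sin].
Qed.

Lemma closed_dot_le c r : closed [set x | dot x c <= r].
Proof.
rewrite -[X in closed X]/((fun x : pt => dot x c) @^-1` [set v | v <= r]).
by apply: preimage_closed; [move=> x _; apply: continuous_dot | apply: closed_le].
Qed.

Lemma closed_dot_ge c r : closed [set x | r <= dot x c].
Proof.
rewrite -[X in closed X]/((fun x : pt => dot x c) @^-1` [set v | r <= v]).
by apply: preimage_closed; [move=> x _; apply: continuous_dot | apply: closed_ge].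
Qed.

Lemma dot_u_equicontinuous (A : set pt) t e : compact A -> 0 < e ->
  exists2 d, 0 < d & forall s y, `|t - s| < d -> A y ->
    `|dot y (u_ t) - dot y (u_ s)| < e.
Proof.
move=> /compact_bounded[M [_ /(_ (`|M| + 1)) AM]] e0.
set B := `|M| + 1.
have B0 : 0 < B by rewrite /B ltr_pwDr.
have {}AM y : A y -> `|y.1| <= B /\ `|y.2| <= B.
  move=> Ay; have /= := AM ltac:(by rewrite (le_lt_trans (ler_norm M)) ?ltrDl) y Ay.
  by rewrite /globally /= prod_normE ge_max => /andP[].
set e' := e / (2 * B + 1).
have e'0 : 0 < e' by rewrite divr_gt0 //; lra.
have Be' : 2 * B * e' < e.
  have : e' * (2 * B + 1) = e by rewrite /e' divfK //; apply/eqP; lra.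
  nra.
have [d1 /= d10 cos_t] := (nbhs_ballP _ _).1
  (@cvgr_dist_lt _ _ _ _ _ cos (cos t) (@continuous_cos R t) _ e'0).
have [d2 /= d20 sin_t] := (nbhs_ballP _ _).1
  (@cvgr_dist_lt _ _ _ _ _ sin (sin t) (@continuous_sin R t) _ e'0).
exists (Num.min d1 d2); first by rewrite lt_min d10 d20.
move=> s y; rewrite lt_min => /andP[s1 s2] /AM[y1 y2].
have {s1}cs : `|cos t - cos s| <= e' by apply/ltW/cos_t.
have {s2}ss : `|sin t - sin s| <= e' by apply/ltW/sin_t.
have -> : dot y (u_ t) - dot y (u_ s) = y.1 * (cos t - cos s) + y.2 * (sin t - sin s).
  by rewrite /dot /u_ /=; ring.
apply: le_lt_trans (ler_normD _ _) _; rewrite !normrM.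
have := ler_pM (normr_ge0 _) (normr_ge0 _) y1 cs.
have := ler_pM (normr_ge0 _) (normr_ge0 _) y2 ss.
lra.
Qed.

Lemma le0_itv_closure {f : R -> R} {a b : R} : a < b -> continuous f ->
  (forall s, a < s < b -> f s <= 0) -> f a <= 0 /\ f b <= 0.
Proof.
move=> ab cf f0; split.
- apply: (closed_cvg _ (@closed_le R 0) _ _ (cvg_at_right_filter (cf a))).
  near=> s; apply: f0; apply/andP; split; near: s; [exact: nbhs_right_gt | exact: nbhs_right_lt].
- apply: (closed_cvg _ (@closed_le R 0) _ _ (cvg_at_left_filter (cf b))).
  near=> s; apply: f0; apply/andP; split; near: s; [exact: nbhs_left_gt | exact: nbhs_left_lt].
Unshelve. all: by end_near. Qed.

Lemma itv_locally_constant (T : Type) (f : R -> T) a b :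
  (forall t, a < t < b -> exists2 e, 0 < e & forall s, t - e < s < t + e -> f s = f t) ->
  forall s t, a < s < b -> a < t < b -> f s = f t.
Proof.
move=> loc; suff le_const s t : a < s -> s <= t -> t < b -> f t = f s.
  move=> s t /andP[a_s sb] /andP[a_t tb]; have [st | ts] := leP s t.
    exact/esym/le_const.
  by apply: le_const => //; exact: ltW.
move=> a_s st tb.
pose S := [set u | s <= u <= t /\ forall v, s <= v <= u -> f v = f s].
have Ss : S s by split=> [|v /andP[sv vs]]; [rewrite lexx st | have -> : v = s by lra].
have hS : has_sup S by split; [exists s | exists t => u [/andP[]]].
set sg := sup S.
have sg1 : s <= sg by apply: sup_upper_bound.
have sg2 : sg <= t by apply: ge_sup; [exists s | move=> u [/andP[]]].
have [e e0 loc_sg] := loc sg ltac:(apply/andP; split; lra).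
have [u [/andP[su ut] fu] sgu] := sup_adherent e0 hS; rewrite -/sg in sgu.
have usg : u <= sg by apply: sup_upper_bound => //; split; [rewrite su ut | ].
pose w := Num.min (sg + e / 2) t.
have [wl wt] : w <= sg + e / 2 /\ w <= t by split; rewrite /w ge_min lexx ?orbT.
have Sw : S w.
  split=> [|v /andP[sv vw]]; first by rewrite wt andbT /w le_min st; lra.
  have [vu | uv] := leP v u; first by apply: fu; rewrite sv.
  rewrite -(fu u) ?su ?lexx // (loc_sg v) ?(loc_sg u) //; apply/andP; split; lra.
have tsg : t <= sg.
  by move: (sup_upper_bound hS Sw); rewrite -/sg /w ge_min => /orP[]; lra.
have -> : t = w by apply/le_anti; rewrite wt /w le_min lexx andbT; lra.
by case: Sw => _; apply; rewrite lexx /w le_min st; lra.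
Qed.

Lemma exists_unit_dot_lt x y : x != y ->
  exists2 c, c.1 ^+ 2 + c.2 ^+ 2 = 1 & dot x c < dot y c.
Proof.
case: x y => [x1 x2] [y1 y2] xy; rewrite /dot /=.
have [lt1 | gt1 | eq1] := ltgtP x1 y1.
- by exists (1, 0) => /=; [ring | lra].
- by exists (-1, 0) => /=; [ring | lra].
have [lt2 | gt2 | eq2] := ltgtP x2 y2.
- by exists (0, 1) => /=; [ring | lra].
- by exists (0, -1) => /=; [ring | lra].
by move: xy; rewrite eq1 eq2 eqxx.
Qed.

Lemma diam_ge0 (A : set pt) : (0 <= diam A)%E.
Proof. by apply: ereal_sup_ubound; right. Qed.

Lemma edist_le_diam {A : set pt} {x y : pt} : A x -> A y -> ((Defs.edist x y)%:E <= diam A)%E.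
Proof. by move=> Ax Ay; apply: ereal_sup_ubound; left; exists x, y. Qed.

Lemma diam_set1 q : diam [set q] = 0%E.
Proof.
apply/le_anti; rewrite diam_ge0 andbT.
apply: ge_ereal_sup => _ [[x [y [-> [-> ->]]]] | ->] //.
by rewrite /Defs.edist !subrr expr0n /= addr0 sqrtr0.
Qed.

Lemma dot_dist_le_edist x y c : c.1 ^+ 2 + c.2 ^+ 2 = 1 ->
  `|dot x c - dot y c| <= Defs.edist x y.
Proof.
move=> c1; rewrite /Defs.edist -sqrtr_sqr; apply: ler_wsqrtr.
rewrite -dotBl /dot; set a := (x - y).1; set b := (x - y).2.
(* Lagrange's identity for the unit vector [c]. *)
have : (a * c.1 + b * c.2) ^+ 2 + (a * c.2 - b * c.1) ^+ 2 = a ^+ 2 + b ^+ 2.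
  by rewrite -[RHS]mulr1 -c1; ring.
by have := sqr_ge0 (a * c.2 - b * c.1); lra.
Qed.

Lemma H1_sub_set1 (U : set pt) q : U `<=` [set q] -> (H1 U <= 0)%E.
Proof.
move=> Uq; apply: ge_ereal_sup => _ [d d0 <-].
apply: ge_ereal_inf; exists 0%E => //.
exists (fun _ => [set q]); split; [|split].
- by move=> x /Uq ->; exists 0%N.
- by move=> i; rewrite diam_set1 lee_fin ltW.
- by rewrite eseries0 // => i _ _; rewrite diam_set1.
Qed.

Lemma sum_diam_ge_proj (U : set pt) c al be (C : nat -> set pt) :
  c.1 ^+ 2 + c.2 ^+ 2 = 1 -> al < be -> `]al, be[%classic `<=` [set dot x c | x in U] ->
  U `<=` \bigcup_i C i -> (forall i, diam (C i) \is a fin_num) ->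
  ((be - al)%:E <= 2%:E * \sum_(0 <= i <oo) diam (C i))%E.
Proof.
move=> c1 ab proj UC Cfin.
pose D i := fine (diam (C i)).
have DE i : (D i)%:E = diam (C i) by rewrite /D fineK.
have D0 i : 0 <= D i by rewrite -lee_fin DE diam_ge0.
pose m i := dot (xget (0, 0) (C i)) c.
pose J i := `[m i - D i, m i + D i]%classic.
(* [C i] projects into the interval of radius [diam (C i)] around one of its points. *)
have cov : `]al, be[%classic `<=` \bigcup_i J i.
  move=> r /proj[x Ux <-]; have [i _ Cix] := UC x Ux; exists i => //.
  have Cim : C i (xget (0, 0) (C i)) by apply: xgetI Cix.
  have := edist_le_diam Cix Cim; rewrite -DE lee_fin.
  move=> /(le_trans (dot_dist_le_edist x _ c c1)) /ler_normlP[? ?].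
  by rewrite /J /m /= in_itv /=; apply/andP; split; lra.
apply: (le_trans (_ : _ <= \sum_(0 <= i <oo) lebesgue_measure (J i))%E).
  have <- : lebesgue_measure `]al, be[%classic = (be - al)%:E.
    by rewrite lebesgue_measure_itv /= lte_fin ab -EFinD.
  exact: (@measure_sigma_subadditive _ _ _ (@lebesgue_measure R) _ J
    (fun i => measurable_itv _) (measurable_itv _) cov).
rewrite -nneseriesZl; last by move=> i _; apply: diam_ge0.
apply: lee_nneseries => // i _; rewrite lebesgue_measure_itv /= -DE -EFinM.
case: ifP => _; rewrite lee_fin ?mulr_ge0 //.
by rewrite (_ : _ - _ = 2 * D i) //; ring.
Qed.

Lemma H1_gt0_proj {U : set pt} {c : pt} {al be : R} : c.1 ^+ 2 + c.2 ^+ 2 = 1 -> al < be ->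
  `]al, be[%classic `<=` [set dot x c | x in U] -> (0 < H1 U)%E.
Proof.
move=> c1 ab proj.
apply: (@lt_le_trans _ _ ((be - al) / 2)%:E); first by rewrite lte_fin; lra.
apply: (@le_trans _ _ (H1_delta 1 U)); last first.
  by apply: ereal_sup_ubound; exists 1 => //=; rewrite ltr01.
apply: le_ereal_inf_tmp => _ [C [UC [C1 ->]]].
have Cfin i : diam (C i) \is a fin_num.
  by rewrite ge0_fin_numE ?diam_ge0 // (le_lt_trans (C1 i)) ?ltry.
by rewrite mulrC EFinM lee_pdivrMl //; apply: sum_diam_ge_proj c1 ab proj UC Cfin.
Qed.

Section SupportFunction.
Variable A : set pt.
Hypotheses (cA : compact A) (A0 : A !=set0).

Lemma dot_max_compact c : exists2 x, A x & forall z, A z -> dot z c <= dot x c.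
Proof.
have [x /set_mem Ax xmax] :=
  compact_EVT_max A0 cA (continuous_subspaceT (continuous_dot c)).
by exists x => // z Az; apply: xmax; rewrite inE.
Qed.

Lemma pK_ub t z : A z -> dot z (u_ t) <= pK A t.
Proof.
move=> Az; have [x _ xmax] := dot_max_compact (u_ t).
apply: sup_upper_bound; last by exists z.
split; first by exists (dot z (u_ t)), z.
by exists (dot x (u_ t)) => _ [y Ay <-]; apply: xmax.
Qed.

Lemma pK_attained t : exists2 x, A x & dot x (u_ t) = pK A t.
Proof.
have [x Ax xmax] := dot_max_compact (u_ t).
exists x => //; apply/le_anti; rewrite pK_ub //=.
by apply: ge_sup; [exists (dot x (u_ t)), x | move=> _ [y Ay <-]; apply: xmax].
Qed.

End SupportFunction.

Section Edges.
Variable K : set pt.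
Hypotheses (cK : compact K) (K0 : K !=set0) (cvK : convex_set2 K).

Lemma eKP t x : eK K t x <-> K x /\ forall z, K z -> dot z (u_ t) <= dot x (u_ t).
Proof.
split=> [[Kx xt] | [Kx xmax]]; first by split=> // z Kz; rewrite xt; apply: pK_ub.
split=> //; have [y Ky yt] := pK_attained cK K0 t.
by rewrite /lK /= -yt; apply/le_anti; rewrite xmax // yt pK_ub.
Qed.

Lemma eK_neq0 t : eK K t !=set0.
Proof. by have [x Kx xt] := pK_attained cK K0 t; exists x. Qed.

Lemma compact_eK t : compact (eK K t).
Proof.
have -> : eK K t = K `&` [set x | pK K t <= dot x (u_ t)].
  apply/seteqP; split=> x [Kx] /=; first by move=> ->.
  by move=> xt; split=> //; apply/le_anti; rewrite xt pK_ub.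
by apply: compact_closedI => //; apply: closed_dot_ge.
Qed.

Lemma vplus_eK t : eK K t (vplus K t).
Proof.
have [x Ex xmax] := dot_max_compact (compact_eK t) (eK_neq0 t) (v_ t).
rewrite /vplus; set P := [set p | _].
by have [] : P (xget (0, 0) P) by apply: xgetI (conj Ex xmax).
Qed.

Lemma eK_convex t x y l : eK K t x -> eK K t y -> 0 <= l <= 1 ->
  eK K t (l * x.1 + (1 - l) * y.1, l * x.2 + (1 - l) * y.2).
Proof.
move=> [Kx xt] [Ky yt] l01; split; first exact: cvK.
by rewrite /lK /= dot_conv xt yt; ring.
Qed.

Lemma eK_dot_between {t : R} {c : pt} {r : R} {x1 x2 : pt} : eK K t x1 -> eK K t x2 ->
  dot x1 c <= r -> r <= dot x2 c -> exists2 x, eK K t x & dot x c = r.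
Proof.
move=> E1 E2 x1r rx2.
have [eq12 | ne12] := eqVneq (dot x1 c) (dot x2 c).
  by exists x1 => //; apply/le_anti; rewrite x1r eq12.
have lt12 : dot x1 c < dot x2 c by rewrite lt_neqAle ne12; lra.
pose l := (dot x2 c - r) / (dot x2 c - dot x1 c).
have l01 : 0 <= l <= 1.
  by rewrite divr_ge0 ?ler_pdivrMr /=; lra.
exists (l * x1.1 + (1 - l) * x2.1, l * x1.2 + (1 - l) * x2.2); first exact: eK_convex.
by rewrite dot_conv /l; field; apply/eqP; lra.
Qed.

(* Upper semicontinuity of the edges: if [x] maximises [dot _ (u_ t)] on [K `&` C] and some
   [z] of [K] did better, then by equicontinuity [z] would also beat, in a nearby direction [s],
   the edge point of [e_K(s)] lying in [C]. *)
Lemma eK_closed_graph C t : closed C ->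
  (forall d, 0 < d -> exists s x, [/\ `|t - s| < d, C x & eK K s x]) ->
  exists2 x, C x & eK K t x.
Proof.
move=> cC tC.
have KC0 : (K `&` C) !=set0 by have [s [x [_ Cx [Kx _]]]] := tC 1 ltr01; exists x.
have [x [Kx Cx] xmax] := dot_max_compact (compact_closedI cK cC) KC0 (u_ t).
exists x => //; apply/eKP; split=> // z Kz; rewrite leNgt; apply/negP => xz.
have eta0 : 0 < (dot z (u_ t) - dot x (u_ t)) / 2 by rewrite divr_gt0 // subr_gt0.
have [d d0 near_t] := dot_u_equicontinuous t _ cK eta0.
have [s [x' [ts Cx' /eKP[Kx' x'max]]]] := tC d d0.
have := x'max z Kz; have := xmax x' (conj Kx' Cx').
move: (near_t s z ts Kz) (near_t s x' ts Kx') => /ltr_normlP[? ?] /ltr_normlP[? ?].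
lra.
Qed.

(* [sg] is the last direction whose edge meets the half-plane [dot _ c <= r]; by closedness
   of the graph, [e_K(sg)] meets both half-planes, and it is convex. *)
Lemma eK_ivt {c : pt} {s1 s2 : R} {p q : pt} {r : R} : s1 <= s2 -> eK K s1 p -> eK K s2 q ->
  dot p c < r < dot q c -> exists s x, [/\ s1 <= s <= s2, eK K s x & dot x c = r].
Proof.
move=> s12 Ep Eq /andP[pr rq].
pose S := [set s | s1 <= s <= s2 /\ exists2 x, eK K s x & dot x c <= r].
have S1 : S s1 by split; [rewrite lexx s12 | exists p => //; exact: ltW].
have hS : has_sup S by split; [exists s1 | exists s2 => s [/andP[]]].
set sg := sup S.
have sg1 : s1 <= sg by apply: sup_upper_bound.
have sg2 : sg <= s2 by apply: ge_sup; [exists s1 | move=> s [/andP[]]].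
have [x1 x1r Ex1] : exists2 x, dot x c <= r & eK K sg x.
  apply: eK_closed_graph (closed_dot_le c r) _ => d d0.
  have [s [/andP[s1s ss2] [x Ex xr]] sgs] := sup_adherent d0 hS.
  have ssg : s <= sg by apply: sup_upper_bound => //; split; [rewrite s1s | exists x].
  by exists s, x; split => //; rewrite ger0_norm; rewrite -/sg in sgs; lra.
have [x2 x2r Ex2] : exists2 x, r <= dot x c & eK K sg x.
  have [-> | sgs2] := eqVneq sg s2; first by exists q => //; exact: ltW.
  have {}sgs2 : sg < s2 by rewrite lt_neqAle sgs2.
  apply: eK_closed_graph (closed_dot_ge c r) _ => d d0.
  pose s := Num.min (sg + d / 2) s2.
  have [sgs ss2] : sg < s /\ s <= s2 by rewrite /s lt_min ge_min lexx orbT; split; lra.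
  have sd : s <= sg + d / 2 by rewrite /s ge_min lexx.
  have [x Ex] := eK_neq0 s.
  exists s, x; split => //; first by rewrite ltr0_norm; lra.
  rewrite /= leNgt; apply/negP => xr.
  have : s <= sg by apply: sup_upper_bound => //; split; [lra | exists x => //; exact: ltW].
  lra.
have [x Ex xr] := eK_dot_between Ex1 Ex2 x1r x2r.
by exists sg, x; split => //; rewrite sg1 sg2.
Qed.

Lemma eK_locally_constant t : ~ normal_angle K t -> exists2 e, 0 < e &
  forall s1 s2 x y, t - e < s1 < t + e -> t - e < s2 < t + e ->
    eK K s1 x -> eK K s2 y -> x = y.
Proof.
move=> /existsNP[e /not_implyP[e0 sigma0]]; exists e => // s1 s2 x y.
wlog s12 : s1 s2 x y / s1 <= s2.
  move=> W s1e s2e Ex Ey; have [s12 | s21] := leP s1 s2; first exact: (W s1 s2 x y s12).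
  by apply/esym/(W s2 s1 y x) => //; exact: ltW.
move=> /andP[? ?] /andP[? ?] Ex Ey.
apply/eqP/negPn/negP => /exists_unit_dot_lt[c c1 xy].
apply: sigma0; apply: (H1_gt0_proj c1 xy) => r /=; rewrite in_itv /= => xry.
have [s [z [/andP[? ?] Ez <-]]] := eK_ivt s12 Ex Ey xry.
by exists z => //; exists s => //=; apply/andP; split; lra.
Qed.

Lemma eK_set1_of_not_normal {t1 t2 : R} : (forall t, t1 < t < t2 -> ~ normal_angle K t) ->
  exists p, forall t, t1 < t < t2 -> eK K t = [set p].
Proof.
move=> not_normal.
have eK_vplus t : t1 < t < t2 -> eK K t = [set vplus K t].
  move=> /not_normal/eK_locally_constant[e e0 loc].
  have te : t - e < t < t + e by apply/andP; split; lra.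
  apply/seteqP; split=> [x Ex | _ ->]; last exact: vplus_eK.
  exact: (loc t t _ _ te te Ex (vplus_eK t)).
exists (vplus K ((t1 + t2) / 2)) => t /[dup] tt /andP[t1t tt2].
rewrite eK_vplus //; congr [set _]; apply: itv_locally_constant tt _.
- move=> u /not_normal/eK_locally_constant[e e0 loc]; exists e => // s us.
  by apply: (loc s u _ _ us _ (vplus_eK s) (vplus_eK u)); apply/andP; split; lra.
- by apply/andP; split; lra.
Qed.

Lemma lK_of_vplus_const {t1 t2 : R} {p : pt} : t1 < t2 ->
  (forall t, t1 < t < t2 -> vplus K t = p) -> forall t, t1 <= t <= t2 -> lK K t p.
Proof.
move=> lt12 vp.
have Ep t : t1 < t < t2 -> eK K t p by move=> tt; rewrite -(vp t tt); apply: vplus_eK.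
have [Kp _] : eK K ((t1 + t2) / 2) p by apply: Ep; apply/andP; split; lra.
move=> t tt; suff [] : eK K t p by [].
apply/eKP; split=> // z Kz; rewrite -subr_le0 -dotBl.
have zp_le0 s : t1 < s < t2 -> dot (z - p) (u_ s) <= 0.
  by move=> /Ep/eKP[_ pmax]; rewrite dotBl subr_le0 pmax.
have [le1 le2] := le0_itv_closure lt12 (continuous_dot_u (z - p)) zp_le0.
case/andP: tt => t1t tt2.
have [-> // | ne1] := eqVneq t t1; have [-> // | ne2] := eqVneq t t2.
by apply: zp_le0; rewrite !lt_def ne1 t1t tt2 eq_sym ne2.
Qed.

Lemma lK_common_in_K {t1 t2 : R} {q : pt} : t1 < t2 -> t2 - t1 < pi ->
  (forall t, t1 <= t <= t2 -> lK K t q) -> K q.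
Proof.
move=> lt12 arc lq.
have [x [Kx xt0]] := eK_neq0 ((t1 + t2) / 2).
have q_max t : t1 <= t <= t2 -> dot (x - q) (u_ t) <= 0.
  by move=> /lq qt; rewrite dotBl subr_le0 qt; apply: pK_ub.
have t0_in : t1 < (t1 + t2) / 2 < t2 by apply/andP; split; lra.
have : x - q = 0.
  apply: (dot_u_arc_eq0 t0_in arc).
  - by apply: q_max; rewrite lexx ltW.
  - by apply: q_max; rewrite lexx ltW.
  rewrite dotBl xt0 (lq ((t1 + t2) / 2)) ?subrr //.
  by apply/andP; split; lra.
by move/eqP; rewrite subr_eq0 => /eqP <-.
Qed.

Lemma eK_set1_of_corner {t1 t2 : R} {q : pt} : t2 - t1 < pi -> lK K t1 q -> lK K t2 q -> K q ->
  forall t, t1 < t < t2 -> eK K t = [set q].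
Proof.
move=> arc l1 l2 Kq t tt.
have q_max s z : lK K s q -> K z -> dot (z - q) (u_ s) <= 0.
  by move=> qs Kz; rewrite dotBl subr_le0 qs; apply: pK_ub.
have Eq : eK K t q.
  apply/eKP; split=> // z Kz; rewrite -subr_le0 -dotBl.
  exact: (dot_u_arc_le0 tt arc (q_max _ _ l1 Kz) (q_max _ _ l2 Kz)).
apply/seteqP; split=> [x /[dup] Ex [Kx _] | _ ->] //=.
apply/eqP; rewrite -subr_eq0; apply/eqP.
apply: (dot_u_arc_eq0 tt arc (q_max _ _ l1 Kx) (q_max _ _ l2 Kx)).
by rewrite dotBl; case: Ex => _ ->; case: Eq => _ ->; rewrite subrr.
Qed.

End Edges.

Lemma vplus_vminus_set1 {K : set pt} {t : R} {p : pt} : eK K t = [set p] ->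
  vplus K t = p /\ vminus K t = p.
Proof.
by move=> Ep; split; apply: xget_unique => [|y []]; rewrite Ep //=; split=> // q ->.
Qed.

Lemma not_normal_of_eK_set1 {K : set pt} {t1 t2 : R} {q : pt} :
  (forall t, t1 < t < t2 -> eK K t = [set q]) -> forall t, t1 < t < t2 -> ~ normal_angle K t.
Proof.
move=> Eq t /andP[t1t tt2] normal.
pose e := Num.min (t - t1) (t2 - t).
have [e1 e2] : e <= t - t1 /\ e <= t2 - t by split; rewrite /e ge_min lexx ?orbT.
have := normal e; rewrite lt_min !subr_gt0 t1t tt2 => /(_ isT); apply/negP; rewrite -leNgt.
apply: (H1_sub_set1 (q := q)) => x [s /= /andP[? ?]].
by rewrite Eq //; apply/andP; split; lra.
Qed.

End Plane.

Theorem theoremA50 (R : realType) (K : set ((R * R)%type)) (t1 t2 : R) :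
  convex_body K -> t1 < t2 -> t2 - t1 < pi ->
  let c1 := (forall t, t1 < t < t2 -> ~ normal_angle K t) in
  let c2 := (exists p : (R * R)%type, forall t, t1 < t < t2 ->
                vplus K t = p /\ vminus K t = p) in
  let c3 := (exists q : (R * R)%type, forall t, t1 <= t <= t2 -> lK K t q) in
  let c4 := (exists q : (R * R)%type, lK K t1 q /\ lK K t2 q /\ K q) in
  (c1 <-> c2) /\ (c2 <-> c3) /\ (c3 <-> c4).
Proof.
move=> [K0 [cK cvK]] lt12 arc c1 c2 c3 c4.
have c12 : c1 -> c2.
  move=> /(eK_set1_of_not_normal cK K0 cvK)[p Ep].
  by exists p => t /Ep /vplus_vminus_set1.
have c23 : c2 -> c3.
  by move=> [p vp]; exists p; apply: (lK_of_vplus_const cK K0 lt12) => t /vp[].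
have c34 : c3 -> c4.
  move=> [q lq]; exists q; split; [|split].
  - by apply: lq; rewrite lexx ltW.
  - by apply: lq; rewrite lexx ltW.
  - exact: (lK_common_in_K cK K0 lt12 arc lq).
have c41 : c4 -> c1.
  move=> [q [l1 [l2 Kq]]]; apply: not_normal_of_eK_set1.
  exact: (eK_set1_of_corner cK K0 arc l1 l2 Kq).
by do ![split] => [/c12 | /c23/c34/c41 | /c23 | /c34/c41/c12 | /c34 | /c41/c12/c23].
Qed.
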